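(* Let $X\subset Y$ be spaces with $X\in\mathcal F_{\omega_1}(Y)$, let $\alpha\le\omega_1$, and suppose $X\subset H$ for some $H\in\mathcal F_{<\alpha}(Y)$. (i) If $X$ is dense in $Y$ and locally $\mathcal F_\alpha$-hard in $Y$, then $H\setminus X$ is dense in $Y$. (ii) More generally, if $X$ is $\mathcal F_\alpha$-hard in $Y$ at some $y\in Y$, then $y\in\overline{H\setminus X}^Y$.
   Context: All spaces are Tychonoff. $\mathcal F$-Borel hierarchy: $\mathcal F_0(Y)$ closed sets; for $0<\alpha<\omega_1$, $\mathcal F_\alpha(Y)$ = countable unions (odd $\alpha$) or countable intersections (even $\alpha$) of members of $\mathcal F_{<\alpha}(Y)=\bigcup_{\beta<\alpha}\mathcal F_\beta(Y)$ (parity of $\lambda+m$, $\lambda$ limit or 0, is that of $m$); $\mathcal F_{\omega_1}(Y)$ = Suslin-$\mathcal F$ subsets of $Y$; $\mathcal F_{<\omega_1}(Y)=\bigcup_{\beta<\omega_1}\mathcal F_\beta(Y)$. $\mathrm{Compl}(A,Y)$ = least $\alpha\le\omega_1$ with $A\in\mathcal F_\alpha(Y)$. For $y\in Y$: $\mathrm{Compl}_y(X,Y)=\min\{\mathrm{Compl}(\overline U^Y\cap X,Y): U$ neighborhood of $y$ in $Y\}$. $X$ is $\mathcal F_\alpha$-hard in $Y$ at $y$ if $\mathrm{Compl}_y(X,Y)\ge\alpha$, and locally $\mathcal F_\alpha$-hard in $Y$ if it is $\mathcal F_\alpha$-hard in $Y$ at every $x\in X$. *)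

From Stdlib Require Import Reals List.
Open Scope R_scope.

Record TopSpace := {
  carrier :> Type;
  is_open : (carrier -> Prop) -> Prop;
  open_ext : forall U V : carrier -> Prop,
      (forall x, U x <-> V x) -> is_open U -> is_open V;
  open_full : is_open (fun _ => True);
  open_inter : forall U V, is_open U -> is_open V ->
      is_open (fun x => U x /\ V x);
  open_union : forall (I : Type) (F : I -> carrier -> Prop),
      (forall i, is_open (F i)) -> is_open (fun x => exists i, F i x)
}.

Section Top.
Variable Y : TopSpace.

Definition is_closed (A : Y -> Prop) : Prop := is_open Y (fun x => ~ A x).

Definition closure (A : Y -> Prop) (y : Y) : Prop :=
  forall U, is_open Y U -> U y -> exists z, U z /\ A z.

Definition dense (A : Y -> Prop) : Prop := forall y, closure A y.

Definition nbhd (N : Y -> Prop) (y : Y) : Prop :=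
  exists U, is_open Y U /\ U y /\ forall z, U z -> N z.

Definition continuous_R (f : Y -> R) : Prop :=
  forall x eps, 0 < eps -> exists U, is_open Y U /\ U x /\
    forall z, U z -> Rabs (f z - f x) < eps.

Definition tychonoff : Prop :=
  (forall x : Y, is_closed (fun z => z = x)) /\
  (forall (F : Y -> Prop) (y : Y), is_closed F -> ~ F y ->
     exists f : Y -> R, continuous_R f /\ f y = 0 /\
       forall z, F z -> f z = 1).
End Top.

Inductive Ord : Type :=
| OZ : Ord
| OS : Ord -> Ord
| OL : (nat -> Ord) -> Ord.

Inductive ole : Ord -> Ord -> Prop :=
| ole_Z : forall b, ole OZ b
| ole_refl : forall a, ole a a
| ole_trans : forall a b c, ole a b -> ole b c -> ole a c
| ole_S_mono : forall a b, ole a b -> ole (OS a) (OS b)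
| ole_S_right : forall a, ole a (OS a)
| ole_cocone : forall a f n, ole a (f n) -> ole a (OL f)
| ole_limiting : forall f b, (forall n, ole (f n) b) -> ole (OL f) b.

Definition olt (a b : Ord) : Prop := ole (OS a) b.
Definition oeq (a b : Ord) : Prop := ole a b /\ ole b a.

Definition limit_or_zero (a : Ord) : Prop :=
  forall b, olt b a -> olt (OS b) a.

(** parity: lambda + m has the parity of m *)
Inductive ord_even : Ord -> Prop :=
| even_lim : forall a, limit_or_zero a -> ord_even a
| even_S : forall a b, ord_odd b -> oeq a (OS b) -> ord_even a
with ord_odd : Ord -> Prop :=
| odd_S : forall a b, ord_even b -> oeq a (OS b) -> ord_odd a.

Section Hier.
Variable Y : TopSpace.

Inductive InF : Ord -> (Y -> Prop) -> Prop :=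
| InF_zero : forall a A, ole a OZ -> is_closed Y A -> InF a A
| InF_odd : forall a A (b : nat -> Ord) (B : nat -> Y -> Prop),
    olt OZ a -> ord_odd a ->
    (forall n, olt (b n) a) -> (forall n, InF (b n) (B n)) ->
    (forall y, A y <-> exists n, B n y) -> InF a A
| InF_even : forall a A (b : nat -> Ord) (B : nat -> Y -> Prop),
    olt OZ a -> ord_even a ->
    (forall n, olt (b n) a) -> (forall n, InF (b n) (B n)) ->
    (forall y, A y <-> forall n, B n y) -> InF a A.

Definition prefix (s : nat -> nat) (n : nat) : list nat := map s (seq 0 n).

Definition suslinF (A : Y -> Prop) : Prop :=
  exists C : list nat -> Y -> Prop, (forall s, is_closed Y (C s)) /\
    forall y, A y <-> exists s : nat -> nat, forall n, C (prefix s (S n)) y.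

(** Ordinals <= omega_1: [Some a] is the countable ordinal a, [None] is omega_1 *)
Definition OrdX := option Ord.

Definition oltX (b a : OrdX) : Prop :=
  match b, a with
  | Some b', Some a' => olt b' a'
  | Some _, None => True
  | None, _ => False
  end.

Definition InFX (a : OrdX) (A : Y -> Prop) : Prop :=
  match a with
  | Some a' => InF a' A
  | None => suslinF A
  end.

Definition InFlt (a : OrdX) (A : Y -> Prop) : Prop :=
  exists b, oltX b a /\ InFX b A.

Definition compl_ge (A : Y -> Prop) (a : OrdX) : Prop :=
  forall b, oltX b a -> ~ InFX b A.

Definition hard_at (X : Y -> Prop) (a : OrdX) (y : Y) : Prop :=
  forall U, nbhd Y U y -> compl_ge (fun z => closure Y U z /\ X z) a.

Definition locally_hard (X : Y -> Prop) (a : OrdX) : Prop :=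
  forall x, X x -> hard_at X a x.
End Hier.

(* If an open set U around y missed H \ X, shrink it (by regularity of Y) to a
   neighborhood W of y with cl W inside U.  Then cl W /\ X = cl W /\ H, and
   since F_b(Y) is stable under intersection with closed sets, this set lies in
   F_b(Y) for some b < a, contradicting F_a-hardness of X at y.  Part (i) follows
   because each point of Y lies in the closure of X, at whose points X is hard. *)
From Stdlib Require Import Reals List Classical Lra.
Open Scope R_scope.

Section Hardness.
Variable Y : TopSpace.

Lemma closed_compl_open (U : Y -> Prop) :
  is_open Y U -> is_closed Y (fun z => ~ U z).
Proof.
  intro hU; unfold is_closed; eapply open_ext; [|exact hU].
  intro z; split; [tauto | apply NNPP].
Qed.

Lemma closed_inter (C A : Y -> Prop) :
  is_closed Y C -> is_closed Y A -> is_closed Y (fun z => C z /\ A z).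
Proof.
  unfold is_closed; intros hC hA.
  pose (F := fun b : bool => if b then fun z => ~ C z else fun z => ~ A z).
  assert (hF : is_open Y (fun z => exists b, F b z)).
  { apply open_union; intros []; assumption. }
  eapply open_ext; [|exact hF]; intro z; split.
  - intros [[|] h] [hCz hAz]; simpl in h; tauto.
  - intro h; destruct (classic (C z)).
    + exists false; simpl; tauto.
    + exists true; simpl; tauto.
Qed.

Lemma closure_closed (W : Y -> Prop) : is_closed Y (closure Y W).
Proof.
  unfold is_closed.
  pose (I := {U : Y -> Prop | is_open Y U /\ forall z, U z -> ~ W z}).
  assert (hI : is_open Y (fun z => exists i : I, proj1_sig i z)).
  { apply open_union; intro i; exact (proj1 (proj2_sig i)). }
  eapply open_ext; [|exact hI]; intro z; split.
  - intros [[U [hU hUW]] hUz] hcl; simpl in hUz.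
    destruct (hcl U hU hUz) as [w [hUw hWw]]; exact (hUW w hUw hWw).
  - intro hncl; unfold closure in hncl.
    apply not_all_ex_not in hncl as [U hncl].
    apply imply_to_and in hncl as [hU hncl].
    apply imply_to_and in hncl as [hUz hncl].
    assert (hUW : forall w, U w -> ~ W w) by (intros w h1 h2; apply hncl; eauto).
    exists (exist _ U (conj hU hUW)); exact hUz.
Qed.

Lemma InF_ext (a : Ord) (A A' : Y -> Prop) :
  InF Y a A -> (forall z, A z <-> A' z) -> InF Y a A'.
Proof.
  intros hA hAA'; destruct hA as [a A ha hA|a A b B h0 hodd hb hB hAB|a A b B h0 hev hb hB hAB].
  - apply InF_zero; auto; unfold is_closed in *; eapply open_ext; [|exact hA].
    intro z; specialize (hAA' z); tauto.
  - eapply InF_odd; eauto; intro z; rewrite <- hAA'; auto.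
  - eapply InF_even; eauto; intro z; rewrite <- hAA'; auto.
Qed.

Lemma InF_inter_closed (a : Ord) (A C : Y -> Prop) :
  InF Y a A -> is_closed Y C -> InF Y a (fun z => C z /\ A z).
Proof.
  intro hA; revert C.
  induction hA as [a A ha hA|a A b B h0 hodd hb hB IH hAB|a A b B h0 hev hb hB IH hAB];
    intros C hC.
  - apply InF_zero; auto; apply closed_inter; auto.
  - apply InF_odd with (b := b) (B := fun n z => C z /\ B n z); auto.
    intro z; rewrite hAB; firstorder.
  - apply InF_even with (b := b) (B := fun n z => C z /\ B n z); auto.
    intro z; rewrite hAB; split.
    + intros [hCz hBz] n; auto.
    + intro h; split; [apply (h 0%nat) | intro n; apply h].
Qed.

Lemma InFlt_countable (a : OrdX) (A : Y -> Prop) :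
  InFlt Y a A -> exists b, oltX (Some b) a /\ InF Y b A.
Proof.
  intros [[b|] [hb hA]]; [now exists b | destruct a; contradiction].
Qed.

(* The Urysohn function f of y and the complement of U separates them, and
   W := [|f| < 1/2] has closure inside [f < 1/2], hence inside U. *)
Lemma tychonoff_closed_nbhd (y : Y) (U : Y -> Prop) :
  tychonoff Y -> is_open Y U -> U y ->
  exists W, is_open Y W /\ W y /\ forall z, closure Y W z -> U z.
Proof.
  intros [_ hsep] hU hUy.
  destruct (hsep (fun z => ~ U z) y (closed_compl_open U hU)) as [f [hf [hfy hf1]]];
    [tauto|].
  destruct (hf y (1/2)) as [W [hW [hWy hWf]]]; [lra|].
  exists W; repeat split; auto.
  intros z hz; apply NNPP; intro hnUz.
  destruct (hf z (1/2)) as [V [hV [hVz hVf]]]; [lra|].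
  destruct (hz V hV hVz) as [w [hVw hWw]].
  specialize (hVf w hVw); specialize (hWf w hWw).
  rewrite hfy in hWf; rewrite (hf1 z hnUz) in hVf.
  apply Rabs_def2 in hVf; apply Rabs_def2 in hWf; lra.
Qed.

Lemma hard_at_closure_diff (X H : Y -> Prop) (a : OrdX) (y : Y) :
  tychonoff Y -> InFlt Y a H -> (forall x, X x -> H x) ->
  hard_at Y X a y -> closure Y (fun z => H z /\ ~ X z) y.
Proof.
  intros hY hH hXH hy U hU hUy; apply NNPP; intro hmiss.
  destruct (tychonoff_closed_nbhd y U hY hU hUy) as [W [hW [hWy hWU]]].
  destruct (InFlt_countable a H hH) as [b [hb hHb]].
  assert (hclWH : InF Y b (fun z => closure Y W z /\ H z))
    by (apply InF_inter_closed; [exact hHb | apply closure_closed]).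
  apply (hy W (ex_intro _ W (conj hW (conj hWy (fun _ h => h)))) (Some b) hb).
  apply (InF_ext b _ _ hclWH); intro z; split.
  - intros [hz hHz]; split; [exact hz|].
    apply NNPP; intro hXz; apply hmiss; exists z; auto.
  - intros [hz hXz]; auto.
Qed.

Lemma locally_hard_dense_diff (X H : Y -> Prop) (a : OrdX) :
  tychonoff Y -> InFlt Y a H -> (forall x, X x -> H x) ->
  dense Y X -> locally_hard Y X a -> dense Y (fun z => H z /\ ~ X z).
Proof.
  intros hY hH hXH hd hl y U hU hUy.
  destruct (hd y U hU hUy) as [x [hUx hXx]].
  exact (hard_at_closure_diff X H a x hY hH hXH (hl x hXx) U hU hUx).
Qed.

End Hardness.

Theorem lemma5p11 (Y : TopSpace) (HY : tychonoff Y) (X : Y -> Prop)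
    (HX : suslinF Y X) (a : OrdX) (H : Y -> Prop)
    (HH : InFlt Y a H) (HXH : forall x, X x -> H x) :
  (dense Y X -> locally_hard Y X a -> dense Y (fun z => H z /\ ~ X z)) /\
  (forall y : Y, hard_at Y X a y -> closure Y (fun z => H z /\ ~ X z) y).
Proof.
  split.
  - exact (locally_hard_dense_diff Y X H a HY HH HXH).
  - intro y; exact (hard_at_closure_diff Y X H a y HY HH HXH).
Qed.
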